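(* Let $n\in\mathbb{Z}^+$, $n\geq 2$, $\beta=\frac{n-3}{n-1}$, let $\alpha:[0,\infty)\to\mathbb{R}$ be continuous, and let $u$ be a $C^3$ solution on $[0,1]\times[0,T)$ of $$u_{xxt}+uu_{xxx}+\beta u_xu_{xx}+\alpha(t)u_{xx}=0$$ with $u(1,t)=u_x(0,t)=u_x(1,t)=0$. Let $H(t)=-\int_0^1u_x(x,t)\,dx=u(0,t)$. Then for $t\in[0,T)$, $$H'(t)+\alpha(t)H(t)+\frac{n}{n-1}\int_0^1 u_x(x,t)^2\,dx=0,$$ and consequently $H'(t)+\alpha(t)H(t)+\frac{n}{n-1}H(t)^2\leq 0$. *)

From Stdlib Require Import Reals List.
From Coquelicot Require Import Coquelicot.
Open Scope R_scope.

Definition dx (u : R -> R -> R) : R -> R -> R :=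
  fun x t => Derive (fun y => u y t) x.
Definition dt (u : R -> R -> R) : R -> R -> R :=
  fun x t => Derive (fun s => u x s) t.

(* Iterated partial derivative: [true] = d/dx, [false] = d/dt,
   applied from the head of the list outwards. *)
Fixpoint dpart (w : list bool) (u : R -> R -> R) : R -> R -> R :=
  match w with
  | nil => u
  | b :: w' => (if b then dx else dt) (dpart w' u)
  end.

Definition C3_at (u : R -> R -> R) (x t : R) : Prop :=
  (forall w : list bool, (length w < 3)%nat ->
     ex_derive (fun y => dpart w u y t) x /\ ex_derive (fun s => dpart w u x s) t) /\
  (forall w : list bool, (length w <= 3)%nat ->
     continuous (fun p : R * R => dpart w u (fst p) (snd p)) (x, t)).

Definition C3_on_strip (u : R -> R -> R) (T : Rbar) : Prop :=
  forall x t, 0 <= x <= 1 -> 0 <= t -> Rbar_lt t T ->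
    exists eps : posreal, forall y s,
      Rabs (y - x) < eps -> Rabs (s - t) < eps -> C3_at u y s.

Definition continuous_on_nonneg (alpha : R -> R) : Prop :=
  forall t, 0 <= t ->
    filterlim alpha (within (fun s => 0 <= s) (locally t)) (locally (alpha t)).

(* The proof avoids any interchange of mixed
   partial derivatives by using the first moment M(t) = ∫₀¹ x u_xx(x,t) dx:
   integrating by parts and using u(1,t) = u_x(0,t) = 0, one has
   H(t) = u(0,t) = M(t) - u_x(1,t).  Since u_x(1,s) = 0 for all s in [t, T),
   the slope s ↦ u_x(1,s) has zero derivative at t, and differentiation under
   the integral sign gives H'(t) = M'(t) = ∫₀¹ x u_xxt dx.  Substituting the
   equation for u_xxt and integrating by parts once more (an explicit
   antiderivative) yields H' + αH + n/(n-1) ∫₀¹ u_x² = 0; the inequality then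
   follows from (∫₀¹ g)² ≤ ∫₀¹ g² applied to g = u_x. *)

From Stdlib Require Import Reals List Lra Lia Classical ClassicalEpsilon.
From Coquelicot Require Import Coquelicot.
Open Scope R_scope.

(* Continuity of real functions, specialized so that [apply] can unify the
   generic Coquelicot lemmas with pointwise sums and products. *)
Lemma continuous_R_plus (f g : R -> R) x :
  continuous f x -> continuous g x -> continuous (fun y => f y + g y) x.
Proof. intros; apply (continuous_plus (V:=R_NormedModule)); auto. Qed.
Lemma continuous_R_minus (f g : R -> R) x :
  continuous f x -> continuous g x -> continuous (fun y => f y - g y) x.
Proof. intros; apply (continuous_minus (V:=R_NormedModule)); auto. Qed.
Lemma continuous_R_mult (f g : R -> R) x :
  continuous f x -> continuous g x -> continuous (fun y => f y * g y) x.
Proof. intros; apply (continuous_mult (K:=R_AbsRing)); auto. Qed.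
Lemma continuous_R_sqr (f : R -> R) x :
  continuous f x -> continuous (fun y => f y ^ 2) x.
Proof.
  intros; simpl; apply continuous_R_mult; auto.
  apply continuous_R_mult; auto; apply continuous_const.
Qed.

Ltac solve_continuity := repeat first
  [ assumption | apply continuous_const | apply continuous_id
  | apply continuous_R_sqr | apply continuous_R_minus
  | apply continuous_R_plus | apply continuous_R_mult ].

Lemma RInt_continuous_01 (g : R -> R) :
  (forall x, 0 <= x <= 1 -> continuous g x) -> is_RInt g 0 1 (RInt g 0 1).
Proof.
  intro Hg. apply (RInt_correct (V:=R_CompleteNormedModule)).
  apply (ex_RInt_continuous (V:=R_CompleteNormedModule)).
  rewrite Rmin_left, Rmax_right by lra. exact Hg.
Qed.

(* Jensen / Cauchy–Schwarz on [0,1]: (∫ g)² ≤ ∫ g², from 0 ≤ ∫ (g - ∫ g)². *)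
Lemma sqr_RInt_le_RInt_sqr (g : R -> R) :
  (forall x, 0 <= x <= 1 -> continuous g x) ->
  (RInt g 0 1) ^ 2 <= RInt (fun x => g x ^ 2) 0 1.
Proof.
  intro Hg. set (m := RInt g 0 1).
  assert (Hsq := RInt_continuous_01 (fun x => g x ^ 2)
                   (fun x Hx => continuous_R_sqr g x (Hg x Hx))).
  assert (Hvar : is_RInt (fun x => (g x - m) ^ 2) 0 1
            (RInt (fun x => g x ^ 2) 0 1 - 2 * m * m + m ^ 2)).
  { replace (RInt (fun x => g x ^ 2) 0 1 - 2 * m * m + m ^ 2) with
      (plus (RInt (fun x => g x ^ 2) 0 1) (plus (scal (-2 * m) m) (scal (1 - 0) (m ^ 2))))
      by (unfold plus, scal; simpl; unfold mult; simpl; ring).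
    eapply is_RInt_ext; [| exact (is_RInt_plus _ _ _ _ _ _ Hsq (is_RInt_plus _ _ _ _ _ _
      (is_RInt_scal _ _ _ (-2 * m) _ (RInt_continuous_01 g Hg)) (is_RInt_const 0 1 (m ^ 2))))].
    intros x _. unfold plus, scal; simpl; unfold mult; simpl. ring. }
  assert (0 <= RInt (fun x => (g x - m) ^ 2) 0 1).
  { apply RInt_ge_0; [lra | eexists; exact Hvar | intros; apply pow2_ge_0]. }
  rewrite (is_RInt_unique _ _ _ _ Hvar) in *. nra.
Qed.

Section Profile.

(* A C³ profile on [0,1]: f1, f2, f3 are the successive derivatives of f0,
   all continuous on [0,1]; it models x ↦ u(x,t) for fixed t. *)
Variables f0 f1 f2 f3 : R -> R.
Hypothesis profile : forall x, 0 <= x <= 1 ->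
  is_derive f0 x (f1 x) /\ is_derive f1 x (f2 x) /\ is_derive f2 x (f3 x) /\
  continuous f0 x /\ continuous f1 x /\ continuous f2 x /\ continuous f3 x.

Lemma profile_RInt_f1 : is_RInt f1 0 1 (f0 1 - f0 0).
Proof.
  apply (is_RInt_derive f0 f1); rewrite Rmin_left, Rmax_right by lra;
    intros x Hx; apply profile; lra.
Qed.

(* First moment of f2, by parts with antiderivative x f1 - f0. *)
Lemma profile_moment_f2 :
  is_RInt (fun x => x * f2 x) 0 1 (f1 1 - f0 1 + f0 0).
Proof.
  replace (f1 1 - f0 1 + f0 0) with ((1 * f1 1 - f0 1) - (0 * f1 0 - f0 0)) by ring.
  apply (is_RInt_derive (fun x => x * f1 x - f0 x));
    rewrite Rmin_left, Rmax_right by lra; intros x Hx;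
    destruct (profile x Hx) as (D0 & D1 & D2 & C0 & C1 & C2 & C3).
  - auto_derive; [repeat split; eexists; eassumption|].
    replace (Derive (fun x0 => f1 x0) x) with (f2 x) by (symmetry; now apply is_derive_unique).
    replace (Derive (fun x0 => f0 x0) x) with (f1 x) by (symmetry; now apply is_derive_unique).
    ring.
  - solve_continuity.
Qed.

(* First moment of the nonlinear terms of the equation, under the boundary
   conditions f0(1) = f1(0) = f1(1) = 0.  The integrand plus
   (3-b)/2 f1² is the derivative of
   P = x f0 f2 - f0 f1 + (b-1)/2 x f1² + a (x f1 - f0). *)
Lemma profile_moment_nonlinear (a b : R) :
  f0 1 = 0 -> f1 0 = 0 -> f1 1 = 0 ->
  is_RInt (fun x => x * (f0 x * f3 x + b * f1 x * f2 x + a * f2 x)) 0 1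
    (a * f0 0 + (3 - b) / 2 * RInt (fun x => f1 x ^ 2) 0 1).
Proof.
  intros B0 B1 B2.
  set (P := fun x => x * f0 x * f2 x - f0 x * f1 x + (b - 1) / 2 * x * f1 x ^ 2
                     + a * (x * f1 x - f0 x)).
  set (dP := fun x => x * (f0 x * f3 x + b * f1 x * f2 x + a * f2 x)
                      - (3 - b) / 2 * f1 x ^ 2).
  assert (HP : is_RInt dP 0 1 (minus (P 1) (P 0))).
  { apply (is_RInt_derive P dP); rewrite Rmin_left, Rmax_right by lra;
      intros x Hx; destruct (profile x Hx) as (D0 & D1 & D2 & C0 & C1 & C2 & C3).
    - unfold P, dP. auto_derive; [repeat split; eexists; eassumption|].
      replace (Derive (fun x0 => f2 x0) x) with (f3 x) by (symmetry; now apply is_derive_unique).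
      replace (Derive (fun x0 => f1 x0) x) with (f2 x) by (symmetry; now apply is_derive_unique).
      replace (Derive (fun x0 => f0 x0) x) with (f1 x) by (symmetry; now apply is_derive_unique).
      field.
    - unfold dP. solve_continuity. }
  assert (Hsq := RInt_continuous_01 (fun x => f1 x ^ 2)
    (fun x Hx => continuous_R_sqr f1 x (proj1 (proj2 (proj2 (proj2 (proj2 (profile x Hx)))))))).
  replace (a * f0 0 + (3 - b) / 2 * RInt (fun x => f1 x ^ 2) 0 1) with
    (plus (minus (P 1) (P 0)) (scal ((3 - b) / 2) (RInt (fun x => f1 x ^ 2) 0 1)))
    by (unfold P, minus, plus, opp, scal; simpl; unfold mult; simpl;
        rewrite B0, B1, B2; ring).
  eapply is_RInt_ext; [| exact (is_RInt_plus _ _ _ _ _ _ HP (is_RInt_scal _ _ _ ((3 - b) / 2) _ Hsq))].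
  intros x _. unfold dP, plus, scal; simpl; unfold mult; simpl. ring.
Qed.

End Profile.

Lemma C3_is_derive_x w u x s : C3_at u x s -> (length w < 3)%nat ->
  is_derive (fun y => dpart w u y s) x (dpart (true :: w) u x s).
Proof. intros [H _] Hl. apply Derive_correct, (H w Hl). Qed.

Lemma C3_continuous_x w u x s : C3_at u x s -> (length w <= 3)%nat ->
  continuous (fun y => dpart w u y s) x.
Proof.
  intros [_ H] Hl.
  apply (continuous_comp_2 (fun y => y) (fun _ => s) (dpart w u));
    [apply continuous_id | apply continuous_const | exact (H w Hl)].
Qed.

Lemma profile_of_C3 u s : (forall x, 0 <= x <= 1 -> C3_at u x s) ->
  forall x, 0 <= x <= 1 ->
  is_derive (fun y => u y s) x (dx u x s) /\
  is_derive (fun y => dx u y s) x (dx (dx u) x s) /\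
  is_derive (fun y => dx (dx u) y s) x (dx (dx (dx u)) x s) /\
  continuous (fun y => u y s) x /\ continuous (fun y => dx u y s) x /\
  continuous (fun y => dx (dx u) y s) x /\ continuous (fun y => dx (dx (dx u)) y s) x.
Proof.
  intros Hc x Hx. specialize (Hc x Hx).
  refine (conj _ (conj _ (conj _ (conj _ (conj _ (conj _ _))))));
    [ exact (C3_is_derive_x nil u x s Hc ltac:(simpl; lia))
    | exact (C3_is_derive_x (true :: nil) u x s Hc ltac:(simpl; lia))
    | exact (C3_is_derive_x (true :: true :: nil) u x s Hc ltac:(simpl; lia))
    | exact (C3_continuous_x nil u x s Hc ltac:(simpl; lia))
    | exact (C3_continuous_x (true :: nil) u x s Hc ltac:(simpl; lia))
    | exact (C3_continuous_x (true :: true :: nil) u x s Hc ltac:(simpl; lia))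
    | exact (C3_continuous_x (true :: true :: true :: nil) u x s Hc ltac:(simpl; lia)) ].
Qed.

(* By compactness of [0,1], the C³ neighbourhoods of the points of the slice
   [0,1] × {t} contain a uniform time band |s - t| < d. *)
Lemma C3_uniform_band (u : R -> R -> R) (T : Rbar) t :
  C3_on_strip u T -> 0 <= t -> Rbar_lt t T ->
  exists d : posreal, forall x s, 0 <= x <= 1 -> Rabs (s - t) < d -> C3_at u x s.
Proof.
  intros HC Ht HT.
  assert (Hloc : forall x, exists e : posreal, 0 <= x <= 1 ->
     forall y s, Rabs (y - x) < e -> Rabs (s - t) < e -> C3_at u y s).
  { intro x. destruct (classic (0 <= x <= 1)) as [Hx | Hx].
    - destruct (HC x t Hx Ht HT) as [e He]. exists e. intros _. exact He.
    - exists (mkposreal 1 Rlt_0_1). intro; contradiction. }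
  destruct (choice _ Hloc) as [delta Hdelta].
  destruct (compactness_value_1d 0 1 delta) as [d Hd].
  exists d. intros x s Hx Hs.
  apply NNPP. intro Hn. apply (Hd x Hx). intros [x' [Hx' [H1 H2]]].
  apply Hn, (Hdelta x' Hx' x s H1). lra.
Qed.

Lemma Derive_vanishing_right (f : R -> R) t e :
  0 < e -> (forall s, t <= s < t + e -> f s = 0) -> ex_derive f t -> Derive f t = 0.
Proof.
  intros He Hz [l Hl]. rewrite (is_derive_unique _ _ _ Hl).
  apply is_derive_Reals in Hl.
  destruct (Req_dec l 0) as [|Hl0]; auto. exfalso.
  destruct (Hl (Rabs l) (Rabs_pos_lt _ Hl0)) as [dl Hdl].
  set (h := Rmin (dl / 2) (e / 2)).
  assert (h_pos : 0 < h) by (apply Rmin_glb_lt; generalize (cond_pos dl); lra).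
  assert (h_small : h <= dl / 2 /\ h <= e / 2) by (split; [apply Rmin_l | apply Rmin_r]).
  assert (Hh := Hdl h (Rgt_not_eq _ _ h_pos)).
  rewrite Rabs_pos_eq, (Hz (t + h)), (Hz t) in Hh by lra.
  specialize (Hh ltac:(generalize (cond_pos dl); lra)).
  replace ((0 - 0) / h - l) with (- l) in Hh by (field; lra).
  rewrite Rabs_Ropp in Hh. lra.
Qed.

Lemma Rbar_lt_right_band (t : R) (T : Rbar) :
  Rbar_lt t T -> exists e, 0 < e /\ forall s, t <= s < t + e -> Rbar_lt s T.
Proof.
  destruct T as [r | |]; simpl; intro HT.
  - exists (r - t). split; [lra | intros s Hs; simpl; lra].
  - exists 1. split; [lra | intros; exact I].
  - contradiction.
Qed.

Lemma center_in_band (t : R) (d : posreal) : Rabs (t - t) < d.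
Proof. rewrite Rminus_diag_eq, Rabs_R0 by reflexivity. apply cond_pos. Qed.

Section TimeBand.

Variables (u : R -> R -> R) (t : R) (d : posreal).
Hypothesis band : forall x s, 0 <= x <= 1 -> Rabs (s - t) < d -> C3_at u x s.

Definition moment (s : R) : R := RInt (fun x => x * dx (dx u) x s) 0 1.

(* On the band, -∫₀¹ u_x = u(0) - u(1) = M - u_x(1): integrate u_x directly and
   x u_xx by parts. *)
Lemma neg_RInt_slope_eq_moment s : Rabs (s - t) < d ->
  - RInt (fun x => dx u x s) 0 1 = moment s - dx u 1 s.
Proof.
  intro Hs.
  assert (P := profile_of_C3 u s (fun x Hx => band x s Hx Hs)).
  unfold moment.
  rewrite (is_RInt_unique _ _ _ _ (profile_RInt_f1 _ _ _ _ P)),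
    (is_RInt_unique _ _ _ _ (profile_moment_f2 _ _ _ _ P)). ring.
Qed.

Lemma is_derive_moment :
  is_derive moment t (RInt (fun x => x * dt (dx (dx u)) x t) 0 1).
Proof.
  assert (E : RInt (fun x => Derive (fun z => x * dx (dx u) x z) t) 0 1
              = RInt (fun x => x * dt (dx (dx u)) x t) 0 1).
  { apply RInt_ext. intros x _. rewrite Derive_scal. reflexivity. }
  rewrite <- E. unfold moment.
  apply (is_derive_RInt_param (fun z x => x * dx (dx u) x z) 0 1 t).
  - exists d. intros s Hs x Hx. rewrite Rmin_left, Rmax_right in Hx by lra.
    apply ex_derive_scal.
    exact (proj2 (proj1 (band x s Hx Hs) (true :: true :: nil) ltac:(simpl; lia))).
  - intros x Hx. rewrite Rmin_left, Rmax_right in Hx by lra.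
    apply (continuity_2d_pt_ext (fun z y => y * dt (dx (dx u)) y z)).
    { intros z y. rewrite Derive_scal. reflexivity. }
    apply (continuity_2d_pt_mult (fun _ v => v) (fun z y => dt (dx (dx u)) y z));
      [apply continuity_2d_pt_id2 |].
    assert (Hc : continuity_2d_pt (fun y z => dt (dx (dx u)) y z) x t).
    { apply continuity_2d_pt_filterlim.
      exact (proj2 (band x t Hx (center_in_band t d)) (false :: true :: true :: nil) ltac:(simpl; lia)). }
    intros eps. destruct (Hc eps) as [e He]. exists e. intros a b Ha Hb. apply He; auto.
  - exists d. intros s Hs. apply (ex_RInt_continuous (V:=R_CompleteNormedModule)).
    rewrite Rmin_left, Rmax_right by lra. intros x Hx.
    destruct (profile_of_C3 u s (fun y Hy => band y s Hy Hs) x Hx)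
      as (D0 & D1 & D2 & C0 & C1 & C2 & C3).
    solve_continuity.
Qed.

Lemma is_derive_neg_RInt_slope e :
  0 < e -> (forall s, t <= s < t + e -> dx u 1 s = 0) ->
  is_derive (fun s => - RInt (fun x => dx u x s) 0 1) t
    (RInt (fun x => x * dt (dx (dx u)) x t) 0 1).
Proof.
  intros He Hzero.
  assert (Hslope : ex_derive (fun s => dx u 1 s) t)
    by exact (proj2 (proj1 (band 1 t ltac:(lra) (center_in_band t d)) (true :: nil) ltac:(simpl; lia))).
  apply (is_derive_ext_loc (fun s => moment s - dx u 1 s)).
  - exists d. intros s Hs. symmetry. exact (neg_RInt_slope_eq_moment s Hs).
  - replace (RInt _ 0 1) with (minus (RInt (fun x => x * dt (dx (dx u)) x t) 0 1) 0)
      by (unfold minus, plus, opp; simpl; ring).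
    apply (is_derive_minus moment (fun s => dx u 1 s)); [exact is_derive_moment |].
    rewrite <- (Derive_vanishing_right _ t e He Hzero Hslope).
    exact (Derive_correct _ _ Hslope).
Qed.

End TimeBand.

Theorem mainTheorem3 (n : nat) (T : Rbar) (alpha : R -> R) (u : R -> R -> R) :
  (2 <= n)%nat ->
  continuous_on_nonneg alpha ->
  C3_on_strip u T ->
  (forall x t, 0 <= x <= 1 -> 0 <= t -> Rbar_lt t T ->
     dt (dx (dx u)) x t + u x t * dx (dx (dx u)) x t
     + ((INR n - 3) / (INR n - 1)) * dx u x t * dx (dx u) x t
     + alpha t * dx (dx u) x t = 0) ->
  (forall t, 0 <= t -> Rbar_lt t T ->
     u 1 t = 0 /\ dx u 0 t = 0 /\ dx u 1 t = 0) ->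
  let H := fun t => - RInt (fun x => dx u x t) 0 1 in
  forall t, 0 <= t -> Rbar_lt t T ->
    H t = u 0 t /\
    ex_derive H t /\
    Derive H t + alpha t * H t
      + (INR n / (INR n - 1)) * RInt (fun x => (dx u x t) ^ 2) 0 1 = 0 /\
    Derive H t + alpha t * H t + (INR n / (INR n - 1)) * (H t) ^ 2 <= 0.
Proof.
  intros Hn _ HC Hpde Hbc H t Ht HT.
  destruct (C3_uniform_band u T t HC Ht HT) as [d band].
  assert (P := profile_of_C3 u t (fun x Hx => band x t Hx (center_in_band t d))).
  destruct (Hbc t Ht HT) as (U1 & Ux0 & Ux1).
  set (b := (INR n - 3) / (INR n - 1)).
  set (I := RInt (fun x => dx u x t ^ 2) 0 1).
  assert (Hn2 : 2 <= INR n) by (apply (le_INR 2); exact Hn).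
  assert (Hcoef : (3 - b) / 2 = INR n / (INR n - 1)) by (unfold b; field; lra).
  assert (HHt : H t = u 0 t).
  { unfold H. rewrite (is_RInt_unique _ _ _ _ (profile_RInt_f1 _ _ _ _ P)), U1. ring. }
  (* H'(t) = ∫ x u_xxt, which the equation turns into -∫ x (u u_xxx + b u_x u_xx + α u_xx). *)
  destruct (Rbar_lt_right_band t T HT) as (e & He & Hright).
  assert (HD := is_derive_neg_RInt_slope u t d band e He
    (fun s Hs => proj2 (proj2 (Hbc s ltac:(lra) (Hright s Hs))))).
  change (is_derive H t (RInt (fun x => x * dt (dx (dx u)) x t) 0 1)) in HD.
  assert (HDval : RInt (fun x => x * dt (dx (dx u)) x t) 0 1
                  = - (alpha t * u 0 t + (3 - b) / 2 * I)).
  { assert (HM := profile_moment_nonlinear _ _ _ _ P (alpha t) b U1 Ux0 Ux1).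
    cbv beta in HM; fold I in HM.
    apply is_RInt_unique. eapply is_RInt_ext; [| exact (is_RInt_opp _ _ _ _ HM)].
    rewrite Rmin_left, Rmax_right by lra. intros x Hx.
    assert (E := Hpde x t ltac:(lra) Ht HT). fold b in E. unfold opp; simpl. nra. }
  assert (HI : (RInt (fun x => dx u x t) 0 1) ^ 2 <= I)
    by (apply sqr_RInt_le_RInt_sqr; intros x Hx; apply (P x Hx)).
  assert (Hpos : 0 < INR n / (INR n - 1)) by (apply Rdiv_lt_0_compat; lra).
  rewrite (is_derive_unique _ _ _ HD), HDval, Hcoef.
  repeat split; [exact HHt | eexists; exact HD | unfold I; rewrite HHt; ring |].
  replace (H t ^ 2) with (RInt (fun x => dx u x t) 0 1 ^ 2) by (unfold H; ring).
  rewrite HHt. fold I. nra.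
Qed.
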